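(* Let $u>0$. Let $c(u)$ be the smallest positive solution $c$, with $0<uc<1/e$, of $uc\,T_1'(uc)-T_1(uc)=u$, and let $\alpha(u)$ be the smallest positive solution of $\alpha e^{-\alpha}=\frac{1}{(1+u)e}$. Then $$\frac{c(u)}{1+\frac1u T_1(uc(u))}=\alpha(u).$$ In particular the lower bound $\frac{c(u)}{1+\frac1u T_1(uc(u))}C(\beta)^{-1}$ on the radius of convergence of the virial expansion equals Groeneveld's bound $\alpha(u)C(\beta)^{-1}$.
   Context: $T_1(z):=z+\sum_{n\ge1}n^n\frac{z^{n+1}}{(n+1)!}$, a power series with radius of convergence $1/e$; $T_1'$ is its derivative. $C(\beta)=\int_{\mathbb R^d}|e^{-\beta\phi(x)}-1|\,dx$ for the pair potential $\phi$. *)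

From Stdlib Require Import Reals Arith ClassicalEpsilon.
Open Scope R_scope.

(* Coefficients of T_1(z) = z + sum_{n>=1} n^n z^{n+1}/(n+1)!
   = sum_{n>=0} n^n z^{n+1}/(n+1)!  (with 0^0 = 1).
   T1_coef (S n) = n^n/(n+1)!, T1_coef 0 = 0. *)
Definition T1_coef (k : nat) : R :=
  match k with
  | O => 0
  | S n => (INR n) ^ n / INR (Factorial.fact (S n))
  end.

(* The sum of the power series T_1 at x (meaningful for |x| < 1/e, where
   the series converges; chosen arbitrarily otherwise). *)
Definition T1 (x : R) : R :=
  epsilon (inhabits 0) (fun l => Pser T1_coef x l).

(* Let T(z) = sum_{n>=1} n^(n-1) z^n/n! be the tree function and
   Y(z) = sum_{n>=0} n^n z^n/n!; both converge for |z| < 1/e.  Abel's identity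
   sum_k C(n,k) k^(k-1) (n-k)^(n-k) = n^n says T Y = z T' = Y - 1, hence
   Y = 1/(1 - T).  Together with T_1' = Y this gives T(z) e^(-T(z)) = z and
   T_1 = 1 - e^(-T) on [0, 1/e).  With x = u c and t = T(x), the equation
   x T_1'(x) - T_1(x) = u becomes 1 + u = e^(-t)/(1 - t), so 1 - t solves
   a e^(-a) = 1/((1+u) e); since a e^(-a) increases on (0, 1], 1 - t is the
   smallest solution alpha(u), and it equals 1/Y(x) = c/(1 + T_1(x)/u). *)

From Stdlib Require Import Reals ClassicalEpsilon.
From Coquelicot Require Import Coquelicot.
From mathcomp Require Import all_boot all_algebra ring zify.

Set Implicit Arguments. Unset Strict Implicit. Unset Printing Implicit Defensive.
Import GRing.Theory Num.Theory.
Local Open Scope ring_scope.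

Lemma mul_bin_sub_eq0 n k j : (n < j + k)%N -> ('C(n, k) * 'C(n - k, j) = 0)%N.
Proof.
move=> lt_n_jk; case: (leqP k n) => [le_kn | /bin_small -> //].
by rewrite [X in (_ * X)%N]bin_small ?muln0 //; lia.
Qed.

Lemma mul_bin_sub_comm n k j : ('C(n, k) * 'C(n - k, j) = 'C(n, j) * 'C(n - j, k))%N.
Proof.
case: (leqP (j + k) n) => le_jk_n; last first.
  by rewrite !mul_bin_sub_eq0 // addnC.
apply/eqP; rewrite -(eqn_pmul2r (_ : 0 < k`! * j`! * (n - k - j)`!)%N); last first.
  by rewrite !muln_gt0 !fact_gt0.
have -> : ('C(n, k) * 'C(n - k, j) * (k`! * j`! * (n - k - j)`!) = 'C(n, k) * (k`! * (n - k)`!))%N.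
  by rewrite -(@bin_fact (n - k) j); [ring | lia].
have -> : (n - k - j = n - j - k)%N by lia.
have -> : ('C(n, j) * 'C(n - j, k) * (k`! * j`! * (n - j - k)`!) = 'C(n, j) * (j`! * (n - j)`!))%N.
  by rewrite -(@bin_fact (n - j) k); [ring | lia].
by rewrite !bin_fact //; lia.
Qed.

Definition rooted_trees (k : nat) : nat := if k is k'.+1 then (k'.+1 ^ k')%N else 0%N.

Section AbelIdentity.
Variable R : comPzRingType.

Lemma sum_ord_widen_vanishing (F : nat -> R) m n : (m <= n)%N ->
  (forall i, (m < i)%N -> F i = 0) -> \sum_(i < m.+1) F i = \sum_(i < n.+1) F i.
Proof.
move=> le_mn F0; rewrite (big_ord_widen n.+1 F) // big_mkcond /=.
by apply: eq_bigr => i _; case: ifP => // /negbT; rewrite -leqNgt => /F0.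
Qed.

Definition binomial_shift (P : nat -> R -> R) :=
  forall n y, P n y = \sum_(j < n.+1) 'C(n, j)%:R * y ^+ j * P (n - j)%N j%:R.

Lemma binomial_shift_unique P Q : binomial_shift P -> binomial_shift Q ->
  (forall n, P n (- n%:R) = Q n (- n%:R)) -> forall n y, P n y = Q n y.
Proof.
move=> shP shQ PQ n; elim/ltn_ind: n => n IH.
have const y : P n y - Q n y = P n 0 - Q n 0.
  rewrite shP shQ -sumrB big_ord_recl /= big1 ?addr0 => [|i _]; last first.
    rewrite -mulrBr IH ?subrr ?mulr0 //; have := ltn_ord i; rewrite /bump /=; lia.
  by rewrite subn0 bin0 expr0 !mul1r mulr0n.
by move=> y; apply/eqP; rewrite -subr_eq0 const -(const (- n%:R)) PQ subrr.
Qed.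

Lemma sum_bin_sign_pow_eq0 n m : (m < n)%N ->
  \sum_(k < n.+1) 'C(n, k)%:R * (-1) ^+ (n - k)%N * k%:R ^+ m = 0 :> R.
Proof.
elim: n m => [|n IH] [|m] //= lt_mn.
  transitivity ((-1 + 1 : R) ^+ n.+1); last by rewrite addNr expr0n.
  rewrite exprDn; apply: eq_bigr => i _.
  by rewrite expr0 expr1n !mulr1 mulr_natl.
rewrite big_ord_recl /= mulr0n expr0n /= mulr0 add0r.
transitivity (n.+1%:R * \sum_(i < n.+1) \sum_(l < m.+1)
    ('C(m, l)%:R * ('C(n, i)%:R * (-1) ^+ (n - i)%N * i%:R ^+ (m - l)%N)) : R).
  rewrite mulr_sumr; apply: eq_bigr => i _.
  rewrite /bump /= add1n subSS exprS.
  have -> : 'C(n.+1, i.+1)%:R * (-1) ^+ (n - i)%N * (i.+1%:R * i.+1%:R ^+ m) =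
      ('C(n.+1, i.+1) * i.+1)%N%:R * (-1) ^+ (n - i)%N * (i%:R + 1) ^+ m :> R.
    by rewrite natrM -[i.+1%:R]natr1; ring.
  rewrite mulnC -mul_bin_diag natrM exprDn !mulr_sumr; apply: eq_bigr => l _.
  by rewrite expr1n mulr1 -mulr_natl; ring.
rewrite exchange_big /= big1 ?mulr0 // => l _.
by rewrite -mulr_sumr IH ?mulr0 //; apply: leq_ltn_trans (leq_subr _ _) _.
Qed.

Lemma exprDn_widen (x z : R) m n : (m <= n)%N ->
  (x + z) ^+ m = \sum_(i < n.+1) x ^+ (m - i)%N * z ^+ i *+ 'C(m, i).
Proof.
move=> le_mn; rewrite exprDn.
apply: (sum_ord_widen_vanishing (F := fun i => x ^+ (m - i)%N * z ^+ i *+ 'C(m, i))) => //.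
by move=> i lt_mi; rewrite bin_small.
Qed.

Definition abel_sum (a : nat -> R) n y :=
  \sum_(k < n.+1) 'C(n, k)%:R * a k * (y + (n - k)%N%:R) ^+ (n - k)%N.

Lemma abel_sum_shift a : binomial_shift (abel_sum a).
Proof.
move=> n y; rewrite /abel_sum.
under eq_bigr => k _ do rewrite addrC (exprDn_widen _ _ (leq_subr k n)) mulr_sumr.
rewrite exchange_big /=; apply: eq_bigr => j _; rewrite mulr_sumr.
rewrite (sum_ord_widen_vanishing (F := fun k => 'C(n, j)%:R * y ^+ j * ('C(n - j, k)%:R * a k *
   (j%:R + (n - j - k)%N%:R) ^+ (n - j - k)%N)) (leq_subr j n)); last first.
  by move=> k lt_k; rewrite (bin_small lt_k) !(mul0r, mulr0).
apply: eq_bigr => k _; rewrite -[_ *+ 'C(n - k, j)]mulr_natr.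
(* [ring] rejects powers whose exponent contains a truncated subtraction. *)
set X := _ ^+ (n - k - j)%N; set Z := _ ^+ (n - j - k)%N.
have -> : 'C(n, k)%:R * a k * (X * y ^+ j * 'C(n - k, j)%:R) =
    ('C(n, k) * 'C(n - k, j))%N%:R * (a k * X * y ^+ j) by rewrite natrM; ring.
have -> : 'C(n, j)%:R * y ^+ j * ('C(n - j, k)%:R * a k * Z) =
    ('C(n, j) * 'C(n - j, k))%N%:R * (a k * Z * y ^+ j) by rewrite natrM; ring.
case: (leqP (j + k) n) => le_jk_n; last by rewrite !mul_bin_sub_eq0 ?mul0r // addnC.
rewrite mul_bin_sub_comm /X /Z.
have -> : (n - j - k = n - k - j)%N by lia.
by rewrite -natrD; congr (_ * (_ * _%:R ^+ _ * _)); lia.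
Qed.

Definition abel_rhs n (y : R) := n%:R * (y + n%:R) ^+ n.-1.

Lemma abel_rhs_shift : binomial_shift abel_rhs.
Proof.
case=> [|m] y; first by rewrite /abel_rhs big_ord1 /= !mulr0n !mul0r mulr0.
rewrite /abel_rhs /= addrC (exprDn_widen _ _ (leqnSn m)) mulr_sumr.
apply: eq_bigr => j _.
have le_j : (j <= m.+1)%N by rewrite -ltnS.
rewrite -natrD subnKC // -mulr_natr.
have -> : (m.+1 - j).-1 = (m - j)%N by lia.
have eC : ('C(m.+1, j) * (m.+1 - j) = m.+1 * 'C(m, j))%N by rewrite mulnC -mul_bin_down.
set X := _ ^+ (m - j)%N.
transitivity ((m.+1 * 'C(m, j))%N%:R * (y ^+ j * X) : R); first by rewrite natrM; ring.
by rewrite -eC natrM; ring.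
Qed.

(* At y = -n the k-th summand is C(n,k) (-1)^(n-k) k^(n-1): the sum is an
   n-th finite difference of a polynomial of degree n - 1. *)
Lemma abel_sum_rooted_trees_at_opp n :
  abel_sum (fun k => (rooted_trees k)%:R) n (- n%:R) = abel_rhs n (- n%:R).
Proof.
case: n => [|[|m]]; first by rewrite /abel_sum /abel_rhs big_ord1 /= mulr0 !mul0r.
  by rewrite /abel_sum /abel_rhs big_ord_recl big_ord1 /bump /= mulr0 !mul0r add0r !expr0 mulr1.
rewrite /abel_rhs /= addNr expr0n /= mulr0 -(sum_bin_sign_pow_eq0 (ltnSn m.+1)).
apply: eq_bigr => -[[|k] lt_k] _ /=; first by rewrite mulr0 mul0r expr0n /= mulr0.
rewrite (natrB _ (lt_k : (k.+1 <= m.+2)%N)) addrA addNr add0r natrX.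
set x := k.+1%:R; rewrite (exprNn x).
have -> : x ^+ m.+1 = x ^+ k * x ^+ (m.+2 - k.+1) by rewrite -exprD; congr (_ ^+ _); lia.
by set s := (-1) ^+ _; set p := x ^+ (m.+2 - k.+1); ring.
Qed.

Lemma abel_rooted_trees n y :
  abel_sum (fun k => (rooted_trees k)%:R) n y = abel_rhs n y.
Proof.
exact: (binomial_shift_unique (abel_sum_shift _) abel_rhs_shift abel_sum_rooted_trees_at_opp).
Qed.

End AbelIdentity.

Lemma sum_bin_rooted_trees n : (0 < n)%N ->
  (\sum_(k < n.+1) 'C(n, k) * rooted_trees k * (n - k) ^ (n - k) = n ^ n)%N.
Proof.
case: n => // m _; apply/eqP; rewrite -(eqr_nat int); apply/eqP.
have := abel_rooted_trees (R := int) m.+1 0.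
rewrite /abel_sum /abel_rhs /= !add0r -exprS natrX => <-.
by rewrite natr_sum; apply: eq_bigr => k _; rewrite add0r !natrM natrX.
Qed.

Close Scope ring_scope.
Open Scope R_scope.
(* Reimported so that [ring] and [field] are again the Stdlib tactics on [R]. *)
From Stdlib Require Import Ring Field Lra.

Lemma factorial_fact n : Factorial.fact n = n`!.
Proof. by elim: n => //= n IH; rewrite factS IH. Qed.

Lemma INR_expn m n : INR (m ^ n)%N = INR m ^ n.
Proof. by elim: n => //= n IH; rewrite expnS -multE mult_INR IH. Qed.

Lemma INR_sum_ord n (f : nat -> nat) :
  INR (\sum_(k < n.+1) f k)%N = sum_f_R0 (fun k => INR (f k)) n.
Proof. by elim: n => [|n IH]; rewrite ?big_ord1 // big_ord_recr /= -plusE plus_INR IH. Qed.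

Lemma INR_fact_pos n : 0 < INR (Factorial.fact n).
Proof. by apply: lt_0_INR; apply/ltP; rewrite factorial_fact fact_gt0. Qed.

Definition tree_coef n := INR (rooted_trees n) / INR (Factorial.fact n).
Definition selfpow_coef n := INR n ^ n / INR (Factorial.fact n).

Lemma tree_selfpow_convolution n : (0 < n)%N ->
  sum_f_R0 (fun k => tree_coef k * selfpow_coef (n - k)) n = selfpow_coef n.
Proof.
move=> n0; rewrite /selfpow_coef -INR_expn -(sum_bin_rooted_trees n0).
rewrite (@INR_sum_ord n (fun k => 'C(n, k) * rooted_trees k * (n - k) ^ (n - k))%N).
rewrite /Rdiv Rmult_comm scal_sum; apply: PartSum.sum_eq => k /leP le_kn.
have fn : INR (Factorial.fact n) =
    INR 'C(n, k) * INR (Factorial.fact k) * INR (Factorial.fact (n - k)).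
  by rewrite -!mult_INR !multE !factorial_fact -mulnA bin_fact.
have := INR_fact_pos k; have := INR_fact_pos (n - k).
have : 0 < INR 'C(n, k) by apply: lt_0_INR; apply/ltP; rewrite bin_gt0.
rewrite /tree_coef fn !mult_INR INR_expn => *; field; lra.
Qed.

Lemma selfpow_coef_ge0 n : 0 <= selfpow_coef n.
Proof. by apply: Rdiv_le_0_compat; [apply: pow_le; apply: pos_INR | apply: INR_fact_pos]. Qed.

Lemma selfpow_coef_le_exp n : selfpow_coef n <= exp 1 ^ n.
Proof.
have -> : exp 1 ^ n = exp (INR n).
  by rewrite -Rpower_pow; [rewrite /Rpower ln_exp Rmult_1_r | exact: exp_pos].
apply: (Rle_trans _ _ _ _ (exp_ge_taylor _ n (pos_INR n))).
case: n => [|n]; first by rewrite /selfpow_coef /=; lra.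
rewrite tech5 -[X in X <= _]Rplus_0_l; apply: Rplus_le_compat_r.
apply: cond_pos_sum => k.
by apply: Rdiv_le_0_compat; [apply: pow_le; apply: pos_INR | apply: INR_fact_pos].
Qed.

Lemma tree_coef_bound n : 0 <= tree_coef n <= selfpow_coef n.
Proof.
case: n => [|m]; first by rewrite /tree_coef /selfpow_coef /=; lra.
rewrite /tree_coef /selfpow_coef; change (rooted_trees m.+1) with (m.+1 ^ m)%N.
have e : 1 <= INR m.+1 by rewrite S_INR; have := pos_INR m; lra.
rewrite INR_expn; have := INR_fact_pos m.+1 => f0.
split; first by apply: Rdiv_le_0_compat; [apply: pow_le|]; lra.
apply: Rmult_le_compat_r; first by apply/Rlt_le/Rinv_0_lt_compat.
rewrite -tech_pow_Rmult -[X in X <= _]Rmult_1_l.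
by apply: Rmult_le_compat_r => //; apply: pow_le; lra.
Qed.

Lemma T1_coef_bound n : 0 <= T1_coef n <= selfpow_coef n.
Proof.
case: n => [|m]; first by rewrite /T1_coef /selfpow_coef /=; lra.
change (T1_coef m.+1) with (INR m ^ m / INR (Factorial.fact m.+1)); rewrite /selfpow_coef.
have := INR_fact_pos m.+1; have := pos_INR m; rewrite -/(INR m.+1) S_INR => m0 f0.
split; first by apply: Rdiv_le_0_compat; [apply: pow_le|]; lra.
apply: Rmult_le_compat_r; first by apply/Rlt_le/Rinv_0_lt_compat.
apply: (Rle_trans _ _ _ (pow_incr (INR m) (INR m + 1) m _)); first lra.
rewrite -tech_pow_Rmult -[X in X <= _]Rmult_1_l.
by apply: Rmult_le_compat_r; [apply: pow_le|]; lra.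
Qed.

Lemma CV_radius_gt_inv_exp1 (a : nat -> R) x :
  (forall n, 0 <= a n <= selfpow_coef n) -> Rabs x < / exp 1 -> Rbar_lt (Rabs x) (CV_radius a).
Proof.
move=> a_bound x_lt; apply: Rbar_lt_le_trans (_ : Rbar_le (/ exp 1) _) => //.
apply: (proj1 (CV_radius_bounded a)); exists 1 => n.
have e0 := exp_pos 1.
rewrite Rabs_right; last first.
  apply: Rle_ge; apply: Rmult_le_pos; first exact: (proj1 (a_bound n)).
  exact/pow_le/Rlt_le/Rinv_0_lt_compat.
have := Rle_trans _ _ _ (proj2 (a_bound n)) (selfpow_coef_le_exp n).
have p := pow_lt _ n e0.
rewrite pow_inv => le_an; apply: (Rmult_le_reg_r (exp 1 ^ n)) => //.
by rewrite Rmult_assoc Rinv_l ?Rmult_1_r; lra.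
Qed.

Definition tree z := PSeries tree_coef z.
Definition tree' z := PSeries (PS_derive tree_coef) z.
Definition selfpow z := PSeries selfpow_coef z.

Lemma PS_derive_tree_coef n : PS_derive tree_coef n = selfpow_coef n.+1.
Proof.
rewrite /PS_derive /tree_coef /selfpow_coef; change (rooted_trees n.+1) with (n.+1 ^ n)%N.
have := INR_fact_pos n.+1; rewrite INR_expn -tech_pow_Rmult => *; field; lra.
Qed.

Lemma PS_derive_T1_coef n : PS_derive T1_coef n = selfpow_coef n.
Proof.
rewrite /PS_derive /selfpow_coef.
change (T1_coef n.+1) with (INR n ^ n / INR (Factorial.fact n.+1)).
change (Factorial.fact n.+1) with (n.+1 * Factorial.fact n)%coq_nat.
have := INR_fact_pos n; have : 0 < INR n.+1 by apply: lt_0_INR; lia.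
rewrite mult_INR => *; field; lra.
Qed.

Lemma PSeries_ge_coef0 (a : nat -> R) x : (forall n, 0 <= a n) -> 0 <= x ->
  Rbar_lt (Rabs x) (CV_radius a) -> a 0%N <= PSeries a x.
Proof.
move=> a0 x0 ltx; rewrite PSeries_decr_1; last exact: CV_radius_inside.
suff : 0 <= PSeries (PS_decr_1 a) x by move=> /(Rmult_le_pos _ _ x0); lra.
rewrite -(PSeries_const_0 x) /PSeries; apply: Series_le => [n|].
  by rewrite Rmult_0_l; split; [lra | apply: Rmult_le_pos; [apply: a0 | exact: pow_le]].
by apply/(ex_pseries_R (PS_decr_1 a))/CV_radius_inside; rewrite CV_radius_decr_1.
Qed.

Section PowerSeriesIdentities.
Variable z : R.
Hypothesis z_lt : Rabs z < / exp 1.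

Let tree_radius : Rbar_lt (Rabs z) (CV_radius tree_coef).
Proof. exact: CV_radius_gt_inv_exp1 tree_coef_bound z_lt. Qed.

Let selfpow_radius : Rbar_lt (Rabs z) (CV_radius selfpow_coef).
Proof.
apply: CV_radius_gt_inv_exp1 z_lt => n; split; [exact: selfpow_coef_ge0 | exact: Rle_refl].
Qed.

Lemma is_derive_tree : is_derive tree z (tree' z).
Proof. exact: is_derive_PSeries tree_radius. Qed.

Lemma T1_PSeries : T1 z = PSeries T1_coef z.
Proof.
have ex : exists l, Pser T1_coef z l.
  exists (PSeries T1_coef z); apply/is_pseries_Reals/PSeries_correct/CV_radius_inside.
  exact: CV_radius_gt_inv_exp1 T1_coef_bound z_lt.
by have /is_pseries_Reals := epsilon_spec (inhabits 0) _ ex; move/is_pseries_unique.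
Qed.

Lemma selfpow_decr : selfpow z = 1 + z * tree' z.
Proof.
rewrite /selfpow (PSeries_decr_1 selfpow_coef); last exact: CV_radius_inside.
rewrite /tree' (PSeries_ext _ (PS_decr_1 selfpow_coef) _ PS_derive_tree_coef).
by rewrite {1}/selfpow_coef /= Rdiv_1_r.
Qed.

Lemma tree_mul_selfpow : tree z * selfpow z = z * tree' z.
Proof.
rewrite /tree /selfpow -PSeries_mult // (PSeries_decr_1 (PS_mult _ _)); last exact: ex_pseries_mult.
rewrite {1}/PS_mult /= /tree_coef /= Rdiv_0_l Rmult_0_l Rplus_0_l; congr (_ * _).
apply: PSeries_ext => n; rewrite PS_derive_tree_coef; exact: tree_selfpow_convolution.
Qed.

Lemma selfpow_mul_one_sub_tree : selfpow z * (1 - tree z) = 1.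
Proof. have := tree_mul_selfpow; rewrite selfpow_decr; lra. Qed.

Lemma tree'_ge1 : 0 <= z -> 1 <= tree' z.
Proof.
have coef0 : PS_derive tree_coef 0 = 1 by rewrite PS_derive_tree_coef /selfpow_coef /=; field.
move=> z0; rewrite /tree' -{1}coef0.
apply: PSeries_ge_coef0 => //; last by rewrite CV_radius_derive.
by move=> n; rewrite PS_derive_tree_coef; apply: selfpow_coef_ge0.
Qed.

End PowerSeriesIdentities.

Lemma locally_Rabs_lt w r : Rabs w < r -> locally w (fun t => Rabs t < r).
Proof.
move=> lt_wr; have eps : 0 < r - Rabs w by lra.
have := proj1 (continuity_pt_locally Rabs w) (Rcontinuity_abs w) (mkposreal _ eps).
by apply: filter_imp => t /= /Rabs_def2; lra.
Qed.

Lemma is_derive_T1 w : Rabs w < / exp 1 -> is_derive T1 w (selfpow w).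
Proof.
move=> w_lt; apply: (is_derive_ext_loc (PSeries T1_coef)).
  by apply: filter_imp (locally_Rabs_lt w_lt) => t /T1_PSeries.
rewrite /selfpow -(PSeries_ext _ _ _ PS_derive_T1_coef).
exact/is_derive_PSeries/CV_radius_gt_inv_exp1/w_lt/T1_coef_bound.
Qed.

Lemma tree0 : tree 0 = 0.
Proof. by rewrite /tree PSeries_0 /tree_coef /= Rdiv_0_l. Qed.

Lemma tree'0 : tree' 0 = 1.
Proof. by rewrite /tree' PSeries_0 PS_derive_tree_coef /selfpow_coef /=; field. Qed.

Lemma selfpow0 : selfpow 0 = 1.
Proof. by rewrite /selfpow PSeries_0 /selfpow_coef /=; field. Qed.

Lemma T1_0 : T1 0 = 0.
Proof. by rewrite T1_PSeries ?Rabs_R0 ?PSeries_0 //; apply/Rinv_0_lt_compat/exp_pos. Qed.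

Lemma tree_bounds x : 0 < x < / exp 1 -> 0 < tree x < 1.
Proof.
move=> [x0 x1]; have x_lt : Rabs x < / exp 1 by rewrite Rabs_right; lra.
have := selfpow_mul_one_sub_tree x_lt; have := tree_mul_selfpow x_lt.
have := selfpow_decr x_lt; have := tree'_ge1 x_lt (Rlt_le _ _ x0).
set T := tree x; set Y := selfpow x; set D := tree' x => D1 eY eTY eY1.
have Y1 : 1 < Y by nra.
split; nra.
Qed.

Lemma derive0_eq (f : R -> R) a b : a <= b ->
  (forall w, a <= w <= b -> derivable_pt_lim f w 0) -> f a = f b.
Proof.
move=> le_ab f'0; case: (Req_dec a b) => [-> // | ne_ab].
have [c [eq_fab _]] := MVT_cor2 f (fun _ => 0) a b ltac:(lra) f'0.
lra.
Qed.

Lemma slope_eq0 (f : R -> R) b K : 0 < b -> f 0 = 0 -> derivable_pt_lim f 0 0 ->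
  (forall w, 0 < w <= b -> f w = K * w) -> K = 0.
Proof.
move=> b0 f0 f'0 linear_f; case: (Req_dec K 0) => // /Rabs_pos_lt K0.
have [delta delta_f] := f'0 _ K0.
set h := Rmin (delta / 2) b.
have h_delta : h <= delta / 2 := Rmin_l _ _.
have hb : h <= b := Rmin_r _ _.
have h0 : 0 < h by apply: Rmin_glb_lt; have := cond_pos delta; lra.
have := cond_pos delta => delta0.
have := delta_f h ltac:(lra) ltac:(rewrite Rabs_right; lra).
rewrite Rplus_0_l f0 linear_f; last lra.
have -> : (K * h - 0) / h - 0 = K by field; lra.
lra.
Qed.

Lemma Derive_tree w : Rabs w < / exp 1 -> Derive (fun w => tree w) w = tree' w.
Proof. by move/is_derive_tree/is_derive_unique. Qed.

Lemma ex_derive_tree w : Rabs w < / exp 1 -> ex_derive (fun w => tree w) w.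
Proof. by move/is_derive_tree; exists (tree' w). Qed.

Lemma tree_mul_exp_opp x : 0 <= x < / exp 1 -> tree x * exp (- tree x) = x.
Proof.
case=> x0 x1; case: (Req_dec x 0) => [-> | x_ne0]; first by rewrite tree0; ring.
(* h w / w has zero derivative on (0, x], so h is linear there, and
   h'(0) = 0 forces the slope to vanish. *)
pose h w := tree w * exp (- tree w) - w.
have h0 : h 0 = 0 by rewrite /h tree0 Ropp_0 exp_0; ring.
have h'0 : derivable_pt_lim h 0 0.
  have w_lt : Rabs 0 < / exp 1 by rewrite Rabs_R0; lra.
  apply/is_derive_Reals; rewrite /h; auto_derive; first by repeat split; exact: ex_derive_tree.
  by rewrite Derive_tree // tree'0 tree0 Ropp_0 exp_0; ring.
have ratio'0 w : 0 < w <= x -> derivable_pt_lim (fun w => h w / w) w 0.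
  move=> [w0 wx]; have w_lt : Rabs w < / exp 1 by rewrite Rabs_right; lra.
  apply/is_derive_Reals; rewrite /h; auto_derive.
    by repeat split; try exact: ex_derive_tree; lra.
  rewrite Derive_tree //.
  have := tree_mul_selfpow w_lt; have := selfpow_mul_one_sub_tree w_lt => eY eTY.
  field_simplify; last lra.
  set E := exp _; set T := tree w; set D := tree' w.
  have -> : - D * E * T * w + D * E * w - E * T = E * ((1 - T) * (w * D) - T) by ring.
  rewrite -eTY.
  have -> : E * ((1 - T) * (T * selfpow w) - T) = E * T * (selfpow w * (1 - T) - 1) by ring.
  by rewrite eY Rminus_diag Rmult_0_r /Rdiv Rmult_0_l.
have linear_h w : 0 < w <= x -> h w = h x / x * w.
  move=> w_in; rewrite -(derive0_eq (f := fun w => h w / w) (proj2 w_in)).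
    by rewrite /Rdiv Rmult_assoc Rinv_l ?Rmult_1_r //; lra.
  by move=> v v_in; apply: ratio'0; lra.
have := slope_eq0 (b := x) ltac:(lra) h0 h'0 linear_h.
rewrite /h /Rdiv => /(Rmult_eq_compat_r x); rewrite Rmult_assoc Rinv_l // Rmult_0_l Rmult_1_r; lra.
Qed.

Lemma exp_opp_tree_mul_tree' w : 0 <= w < / exp 1 -> exp (- tree w) * tree' w = selfpow w.
Proof.
move=> w_in; case: (Rle_lt_or_eq_dec 0 w (proj1 w_in)) => [w0 | <-]; last first.
  by rewrite tree0 tree'0 selfpow0 Ropp_0 exp_0 Rmult_1_l.
have w_lt : Rabs w < / exp 1 by rewrite Rabs_right; lra.
have [T0 _] := @tree_bounds w ltac:(lra).
have eY := tree_mul_selfpow w_lt; have eE := tree_mul_exp_opp w_in.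
apply: (Rmult_eq_reg_l (tree w)); last lra.
rewrite eY; have -> : w * tree' w = tree w * exp (- tree w) * tree' w by rewrite eE.
by rewrite Rmult_assoc.
Qed.

Lemma T1_eq_one_sub_exp x : 0 <= x < / exp 1 -> T1 x = 1 - exp (- tree x).
Proof.
move=> x_in.
have F'0 w : 0 <= w <= x -> derivable_pt_lim (fun w => T1 w + exp (- tree w)) w 0.
  move=> w_in; have w_lt : Rabs w < / exp 1 by rewrite Rabs_right; lra.
  have := exp_opp_tree_mul_tree' (ltac:(lra) : 0 <= w < / exp 1) => eY.
  apply/is_derive_Reals; auto_derive.
    by repeat split; [exists (selfpow w); exact: is_derive_T1 | exact: ex_derive_tree].
  rewrite Derive_tree // (is_derive_unique _ _ _ (is_derive_T1 w_lt)); lra.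
have := derive0_eq (proj1 x_in) F'0.
rewrite T1_0 tree0 Ropp_0 exp_0; lra.
Qed.

Lemma mul_exp_opp_lt a b : 0 < a -> a < b -> b <= 1 -> a * exp (- a) < b * exp (- b).
Proof.
move=> a0 lt_ab b1.
have f' c : a <= c <= b -> derivable_pt_lim (fun c => c * exp (- c)) c ((1 - c) * exp (- c)).
  by move=> _; apply/is_derive_Reals; auto_derive => //; ring.
have [c [eq_f [ac cb]]] := MVT_cor2 _ _ a b lt_ab f'.
have : 0 < (1 - c) * exp (- c) * (b - a).
  by apply: Rmult_lt_0_compat; [apply: Rmult_lt_0_compat; [lra | exact: exp_pos] | lra].
lra.
Qed.

Theorem proposition5p3 (u c alpha : R) (hu : 0 < u)
  (hc : 0 < c /\ 0 < u * c < / exp 1 /\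
        (exists d, derivable_pt_lim T1 (u * c) d /\ u * c * d - T1 (u * c) = u))
  (hcmin : forall c', 0 < c' -> 0 < u * c' < / exp 1 ->
        (exists d, derivable_pt_lim T1 (u * c') d /\ u * c' * d - T1 (u * c') = u) ->
        c <= c')
  (ha : 0 < alpha /\ alpha * exp (- alpha) = / ((1 + u) * exp 1))
  (hamin : forall a, 0 < a -> a * exp (- a) = / ((1 + u) * exp 1) -> alpha <= a) :
  c / (1 + / u * T1 (u * c)) = alpha.
Proof.
case: hc => c0 [x_in [d [T1'x crit]]]; case: ha => alpha0 alpha_root.
set x := u * c in x_in T1'x crit *.
have x_lt : Rabs x < / exp 1 by rewrite Rabs_right; lra.
have d_eq : d = selfpow x.
  exact: uniqueness_limite T1'x (proj1 (is_derive_Reals _ _ _) (is_derive_T1 x_lt)).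
have [t0 t1] := tree_bounds x_in.
have eY := selfpow_mul_one_sub_tree x_lt.
have eT1 := T1_eq_one_sub_exp (ltac:(lra) : 0 <= x < / exp 1).
have eE := tree_mul_exp_opp (ltac:(lra) : 0 <= x < / exp 1).
set t := tree x in t0 t1 eY eT1 eE.
have eYinv : selfpow x = / (1 - t) by apply: (Rmult_eq_reg_r (1 - t)); [rewrite eY Rinv_l | ]; lra.
have one_add_u : 1 + u = exp (- t) / (1 - t).
  by rewrite -crit d_eq eT1 eYinv -eE; field; lra.
have alpha_root' : (1 - t) * exp (- (1 - t)) = / ((1 + u) * exp 1).
  have -> : exp (- (1 - t)) = exp t * / exp 1 by rewrite -exp_Ropp -exp_plus; f_equal; ring.
  have := exp_pos t; have := exp_pos 1.
  rewrite one_add_u exp_Ropp => *; field; repeat split; lra.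
have -> : alpha = 1 - t.
  case: (Rle_lt_or_eq_dec _ _ (hamin (1 - t) ltac:(lra) alpha_root')) => // lt_alpha.
  by have := mul_exp_opp_lt alpha0 lt_alpha ltac:(lra); rewrite alpha_root alpha_root'; lra.
have -> : T1 x = x * selfpow x - u by rewrite -d_eq; lra.
by rewrite eYinv /x; field; repeat split; nra.
Qed.
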